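(* Let $\mathsf{u},\mathsf{v}\in V$ be consistently oriented spacelike vectors, let $p\in E$ and $\mathsf{w}\in V$, and suppose the crooked planes $\mathcal{C}(\mathsf{u},p)$ and $\mathcal{C}(\mathsf{v},p+\mathsf{w})$ are disjoint. Then $\mathcal{C}(\mathsf{v},p+\mathsf{w})\subset\mathcal{H}(-\mathsf{u},p)$.
   Context: $V=\mathbb{R}^3$ with Lorentzian inner product $x\cdot y=x_1y_1+x_2y_2-x_3y_3$ and standard orientation; $E$ is the affine space with translation space $V$. Null: $x\cdot x=0$; spacelike: $x\cdot x>0$; future-pointing: third coordinate positive. For spacelike $\mathsf{v}$, $\mathsf{v}^-,\mathsf{v}^+$ are the two future-pointing null vectors of Euclidean length $1$ in $\mathsf{v}^\perp$, labelled so that $(\mathsf{v}^-,\mathsf{v}^+,\mathsf{v})$ is positively oriented. For null $x$, $\mathcal{P}(x)$ is the set of spacelike $w\in x^\perp$ with $w^+$ a positive multiple of $x$. The crooked plane $\mathcal{C}(\mathsf{v},p)=(p+\mathcal{P}(\mathsf{v}^+))\cup(p+\mathcal{P}(\mathsf{v}^-))\cup(p+\{x:\mathsf{v}\cdot x=0,\ x\cdot x\le0\})$. The crooked half-space $\mathcal{H}(\mathsf{v},p)$ is the set of $q\in E$ with $(q-p)\cdot\mathsf{v}^+\le0$ if $(q-p)\cdot\mathsf{v}\ge0$, and $(q-p)\cdot\mathsf{v}^-\ge0$ if $(q-p)\cdot\mathsf{v}\le0$ (both when $(q-p)\cdot\mathsf{v}=0$). Spacelike vectors $\mathsf{v}_1,\dots,\mathsf{v}_n$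 are consistently oriented if for all $i\ne j$: $\mathsf{v}_i\cdot\mathsf{v}_j<0$, $\mathsf{v}_i\cdot\mathsf{v}_j^+\le0$ and $\mathsf{v}_i\cdot\mathsf{v}_j^-\le0$. *)

From Stdlib Require Import Reals ClassicalEpsilon.
Open Scope R_scope.

(* V = R^3 as triples; E (affine space with translation space V) is modelled
   by R^3 as well, with p + w the translate. *)
Record vec := Vec { c1 : R; c2 : R; c3 : R }.

Definition vzero : vec := Vec 0 0 0.
Definition vadd (x y : vec) : vec := Vec (c1 x + c1 y) (c2 x + c2 y) (c3 x + c3 y).
Definition vsub (x y : vec) : vec := Vec (c1 x - c1 y) (c2 x - c2 y) (c3 x - c3 y).
Definition vopp (x : vec) : vec := Vec (- c1 x) (- c2 x) (- c3 x).
Definition vscale (k : R) (x : vec) : vec := Vec (k * c1 x) (k * c2 x) (k * c3 x).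

Definition ldot (x y : vec) : R := c1 x * c1 y + c2 x * c2 y - c3 x * c3 y.

Definition null (x : vec) : Prop := ldot x x = 0.
Definition spacelike (x : vec) : Prop := ldot x x > 0.
Definition future (x : vec) : Prop := c3 x > 0.

Definition enorm (x : vec) : R := sqrt (c1 x ^ 2 + c2 x ^ 2 + c3 x ^ 2).

(* standard orientation: (a,b,c) positively oriented iff det[a b c] > 0 *)
Definition det3 (a b c : vec) : R :=
  c1 a * (c2 b * c3 c - c3 b * c2 c)
  - c2 a * (c1 b * c3 c - c3 b * c1 c)
  + c3 a * (c1 b * c2 c - c2 b * c1 c).

Definition null_frame (v ym yp : vec) : Prop :=
  null ym /\ null yp /\ future ym /\ future yp /\
  enorm ym = 1 /\ enorm yp = 1 /\
  ldot v ym = 0 /\ ldot v yp = 0 /\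
  det3 ym yp v > 0.

(* the (unique, for spacelike v) pair (v^-, v^+), chosen by description *)
Definition vpm (v : vec) : vec * vec :=
  epsilon (inhabits (vzero, vzero)) (fun pr => null_frame v (fst pr) (snd pr)).
Definition vminus (v : vec) : vec := fst (vpm v).
Definition vplus (v : vec) : vec := snd (vpm v).

Definition Pset (x w : vec) : Prop :=
  spacelike w /\ ldot w x = 0 /\ exists k, k > 0 /\ vplus w = vscale k x.

Definition crooked_plane (v p q : vec) : Prop :=
  Pset (vplus v) (vsub q p) \/ Pset (vminus v) (vsub q p) \/
  (ldot v (vsub q p) = 0 /\ ldot (vsub q p) (vsub q p) <= 0).

Definition crooked_halfspace (v p q : vec) : Prop :=
  (ldot (vsub q p) v >= 0 -> ldot (vsub q p) (vplus v) <= 0) /\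
  (ldot (vsub q p) v <= 0 -> ldot (vsub q p) (vminus v) >= 0).

Definition consistently_oriented2 (u v : vec) : Prop :=
  spacelike u /\ spacelike v /\
  ldot u v < 0 /\
  ldot u (vplus v) <= 0 /\ ldot u (vminus v) <= 0 /\
  ldot v (vplus u) <= 0 /\ ldot v (vminus u) <= 0.

(* For spacelike [u], the function [side u] below, a max/min of the
   three linear forms [x.u^+], [x.u^-], [x.u], is continuous, vanishes only on
   the crooked plane [C(u,0)], and is negative exactly on the interior of
   [H(-u,0)].  Every crooked plane [C(v,0)] is a cone, hence star-shaped about
   [0]; so if [C(v,p+w)] misses [C(u,p)], the intermediate value theorem shows
   that [side u (. - p)] has constant sign on [C(v,p+w)].  Consistent
   orientation provides a point of [C(v,p+w)], far out along a wing or the stem,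
   where it is [<= 0], hence [< 0]. *)

From Pilot Require Import Defs.
From Stdlib Require Import Reals Lra Psatz ClassicalEpsilon.
(* [Reals] shadows the record field [c1] of [vec]. *)
Import Defs.
Open Scope R_scope.

Lemma vec_ext (x y : vec) : c1 x = c1 y -> c2 x = c2 y -> c3 x = c3 y -> x = y.
Proof. destruct x, y; simpl; intros; subst; reflexivity. Qed.

Ltac vec_ring := apply vec_ext; unfold vadd, vsub, vscale, vopp, vzero; simpl; ring.

Lemma ldot_comm x y : ldot x y = ldot y x.
Proof. unfold ldot; ring. Qed.
Lemma ldot_addl x y z : ldot (vadd x y) z = ldot x z + ldot y z.
Proof. unfold ldot, vadd; simpl; ring. Qed.
Lemma ldot_subl x y z : ldot (vsub x y) z = ldot x z - ldot y z.
Proof. unfold ldot, vsub; simpl; ring. Qed.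
Lemma ldot_scalel k x z : ldot (vscale k x) z = k * ldot x z.
Proof. unfold ldot, vscale; simpl; ring. Qed.
Lemma ldot_scaler k x z : ldot x (vscale k z) = k * ldot x z.
Proof. unfold ldot, vscale; simpl; ring. Qed.
Lemma ldot_oppl x z : ldot (vopp x) z = - ldot x z.
Proof. unfold ldot, vopp; simpl; ring. Qed.
Lemma ldot_oppr x z : ldot x (vopp z) = - ldot x z.
Proof. unfold ldot, vopp; simpl; ring. Qed.

Lemma ldot_future_null_le0 x y :
  null x -> null y -> future x -> future y -> ldot x y <= 0.
Proof.
  destruct x as [x1 x2 x3], y as [y1 y2 y3]; unfold null, future, ldot; simpl.
  intros Hx Hy Fx Fy.
  assert (Lagrange : (x3*y3)*(x3*y3) - (x1*y1+x2*y2)*(x1*y1+x2*y2)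
                     = (x1*y2-x2*y1)*(x1*y2-x2*y1)).
  { replace (x3*y3*(x3*y3)) with ((x3*x3)*(y3*y3)) by ring.
    replace (x3*x3) with (x1*x1+x2*x2) by lra.
    replace (y3*y3) with (y1*y1+y2*y2) by lra. ring. }
  pose proof (Rle_0_sqr (x1*y2-x2*y1)); unfold Rsqr in *.
  assert (0 < x3*y3) by (apply Rmult_lt_0_compat; lra).
  nra.
Qed.

(* Cramer's rule: [det3 m n v] times each coordinate of [d] is a combination
   of [ldot d m], [ldot d n] and [ldot d v]. *)
Lemma vec_eq0_of_ldot_basis m n v d :
  det3 m n v <> 0 -> ldot d m = 0 -> ldot d n = 0 -> ldot d v = 0 -> d = vzero.
Proof.
  destruct m as [m1 m2 m3], n as [n1 n2 n3], v as [v1 v2 v3], d as [d1 d2 d3];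
  unfold det3, ldot, vzero; simpl; intros HD H1 H2 H3.
  set (D := m1 * (n2 * v3 - n3 * v2) - m2 * (n1 * v3 - n3 * v1) + m3 * (n1 * v2 - n2 * v1)) in *.
  assert (E1 : D * d1 = (d1*m1+d2*m2-d3*m3) * (n2*v3-n3*v2)
                        + (d1*n1+d2*n2-d3*n3) * (v2*m3-v3*m2)
                        + (d1*v1+d2*v2-d3*v3) * (m2*n3-m3*n2)) by (unfold D; ring).
  assert (E2 : D * d2 = (d1*m1+d2*m2-d3*m3) * (n3*v1-n1*v3)
                        + (d1*n1+d2*n2-d3*n3) * (v3*m1-v1*m3)
                        + (d1*v1+d2*v2-d3*v3) * (m3*n1-m1*n3)) by (unfold D; ring).
  assert (E3 : D * d3 = - ((d1*m1+d2*m2-d3*m3) * (n1*v2-n2*v1)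
                        + (d1*n1+d2*n2-d3*n3) * (v1*m2-v2*m1)
                        + (d1*v1+d2*v2-d3*v3) * (m1*n2-m2*n1))) by (unfold D; ring).
  rewrite H1, H2, H3 in E1, E2, E3.
  f_equal; apply (Rmult_eq_reg_l D); lra.
Qed.

Lemma future_scale_pos c z : future z -> future (vscale c z) -> c > 0.
Proof. unfold future, vscale; simpl; intros Hz Hcz. nra. Qed.

Section NullFrame.

Variables v m n : vec.
Hypotheses (Hv : spacelike v) (Hf : null_frame v m n).

Ltac frame_facts :=
  destruct Hf as (Hm & Hn & Fm & Fn & _ & _ & Hvm & Hvn & Hdet);
  unfold null, spacelike in *.

Lemma frame_mn_lt0 : ldot m n < 0.
Proof.
  frame_facts.
  assert (Hle : ldot m n <= 0) by (apply ldot_future_null_le0; auto).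
  destruct (Req_dec (ldot m n) 0) as [E|E]; [|lra].
  assert (Z : m = vzero).
  { apply (vec_eq0_of_ldot_basis m n v); try lra; auto. rewrite ldot_comm; auto. }
  unfold future in Fm; rewrite Z in Fm; simpl in Fm; lra.
Qed.

Lemma frame_decomp z :
  z = vadd (vadd (vscale (ldot z n / ldot m n) m) (vscale (ldot z m / ldot m n) n))
           (vscale (ldot z v / ldot v v) v).
Proof.
  pose proof frame_mn_lt0 as Hmn. frame_facts.
  set (c := vadd _ _).
  assert (Z : vsub z c = vzero).
  { apply (vec_eq0_of_ldot_basis m n v); try lra; unfold c;
    rewrite ?ldot_subl, ?ldot_addl, ?ldot_scalel;
    rewrite ?(ldot_comm n m), ?(ldot_comm m v), ?(ldot_comm n v), ?Hm, ?Hn, ?Hvm, ?Hvn;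
    field; lra. }
  clearbody c.
  apply vec_ext;
    [apply (f_equal c1) in Z | apply (f_equal c2) in Z | apply (f_equal c3) in Z];
    unfold vsub in Z; simpl in Z; lra.
Qed.

Lemma frame_ldot z y :
  ldot z y = (ldot z n * ldot y m + ldot z m * ldot y n) / ldot m n
             + ldot z v * ldot y v / ldot v v.
Proof.
  pose proof frame_mn_lt0 as Hmn. frame_facts.
  rewrite (frame_decomp z) at 1.
  rewrite !ldot_addl, !ldot_scalel, (ldot_comm m y), (ldot_comm n y), (ldot_comm v y).
  field; lra.
Qed.

Lemma frame_ldot_self_of_perp z :
  ldot z n = 0 \/ ldot z m = 0 -> ldot z z = ldot z v * ldot z v / ldot v v.
Proof.
  intros H. pose proof frame_mn_lt0 as Hmn. unfold spacelike in Hv.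
  rewrite frame_ldot. destruct H as [H|H]; rewrite H; field; lra.
Qed.

Lemma frame_future_null_perp y :
  null y -> future y -> ldot y v = 0 ->
  (exists c, c > 0 /\ y = vscale c m) \/ (exists c, c > 0 /\ y = vscale c n).
Proof.
  intros Hy Fy Hyv. pose proof frame_mn_lt0 as Hmn.
  unfold null in Hy.
  assert (P : ldot y n * ldot y m = 0).
  { replace (ldot y n * ldot y m) with (ldot m n / 2 * ldot y y).
    - rewrite Hy; ring.
    - unfold spacelike in Hv. rewrite (frame_ldot y y), Hyv. field; lra. }
  assert (D := frame_decomp y). rewrite Hyv in D.
  frame_facts. unfold future in *.
  apply Rmult_integral in P. destruct P as [P|P]; rewrite P in D.
  - assert (E : y = vscale (ldot y m / ldot m n) n)
      by (rewrite D at 1; apply vec_ext; unfold vadd, vscale; simpl; field; lra).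
    right. exists (ldot y m / ldot m n). split; [|exact E].
    rewrite E in Fy. exact (future_scale_pos _ _ Fn Fy).
  - assert (E : y = vscale (ldot y n / ldot m n) m)
      by (rewrite D at 1; apply vec_ext; unfold vadd, vscale; simpl; field; lra).
    left. exists (ldot y n / ldot m n). split; [|exact E].
    rewrite E in Fy. exact (future_scale_pos _ _ Fm Fy).
Qed.

Lemma frame_det_nonneg z : null z -> future z -> 0 <= det3 z n v.
Proof.
  intros Hz Fz. pose proof frame_mn_lt0 as Hmn. unfold spacelike in Hv.
  assert (E : det3 z n v * ldot m n = ldot z n * det3 m n v).
  { rewrite (frame_decomp z) at 1. unfold det3, vadd, vscale; simpl. field; lra. }
  frame_facts.
  assert (Hzn : ldot z n <= 0) by (apply ldot_future_null_le0; auto).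
  nra.
Qed.

End NullFrame.

Lemma spacelike_opp v : spacelike v -> spacelike (vopp v).
Proof. unfold spacelike; rewrite ldot_oppl, ldot_oppr; lra. Qed.

Lemma null_frame_opp v m n : null_frame v m n -> null_frame (vopp v) n m.
Proof.
  unfold null_frame; rewrite !ldot_oppl.
  replace (det3 n m (vopp v)) with (det3 m n v) by (unfold det3, vopp; simpl; ring).
  intuition lra.
Qed.

(* [n] is future null and orthogonal to [x], hence a positive multiple of [m']
   or of [n']; the orientations of the two frames rule out [m']. *)
Lemma frame_plus_parallel u m n x m' n' :
  spacelike u -> null_frame u m n -> spacelike x -> null_frame x m' n' ->
  ldot x n = 0 -> ldot x u > 0 -> exists c, c > 0 /\ n' = vscale c n.
Proof.
  intros Hu Hf Hx Hf' Hxn Hxu.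
  pose proof (frame_mn_lt0 u m n Hf) as Hmn. unfold spacelike in Hu.
  set (g := ldot x u / ldot u u).
  assert (Hg : g > 0) by (apply Rdiv_lt_0_compat; lra).
  assert (Hdet : forall a, det3 n a x = g * det3 n a u).
  { intro a. rewrite (frame_decomp u m n Hu Hf x), Hxn.
    unfold g, det3, vadd, vscale; simpl. field; lra. }
  pose proof Hf as (_ & Hn & _ & Fn & _).
  pose proof Hf' as (_ & Hn' & _ & Fn' & _ & _ & _ & _ & Hdet').
  destruct (frame_future_null_perp x m' n' Hx Hf' n Hn Fn) as [[c [Hc E]]|[c [Hc E]]].
  { rewrite ldot_comm; exact Hxn. }
  - exfalso.
    assert (Hpos : det3 n n' x = c * det3 m' n' x) by (rewrite E; unfold det3, vscale; simpl; ring).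
    assert (Hneg : det3 n n' u = - det3 n' n u) by (unfold det3; ring).
    pose proof (frame_det_nonneg u m n Hu Hf n' Hn' Fn').
    rewrite Hdet, Hneg in Hpos. nra.
  - exists (/ c). split; [apply Rinv_0_lt_compat; lra|].
    rewrite E. apply vec_ext; unfold vscale; simpl; field; lra.
Qed.

Lemma frame_minus_parallel u m n x m' n' :
  spacelike u -> null_frame u m n -> spacelike x -> null_frame x m' n' ->
  ldot x n = 0 -> ldot x u < 0 -> exists c, c > 0 /\ m' = vscale c n.
Proof.
  intros Hu Hf Hx Hf' Hxn Hxu.
  apply (frame_plus_parallel u m n (vopp x) n' m'); auto using spacelike_opp, null_frame_opp;
    rewrite ldot_oppl; lra.
Qed.

Lemma null_frame_exists v : spacelike v -> exists m n, null_frame v m n.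
Proof.
  destruct v as [a b c]. unfold spacelike, ldot; simpl. intro Hsp.
  set (r2 := a*a+b*b).
  assert (Hr : r2 > 0) by (unfold r2; nra).
  set (s := sqrt (r2 - c*c)).
  assert (Hs2 : s * s = r2 - c*c) by (unfold s; apply sqrt_sqrt; unfold r2; lra).
  assert (Hs : s > 0) by (unfold s; apply sqrt_lt_R0; unfold r2; lra).
  set (h := sqrt (/2)).
  assert (Hh2 : h * h = /2) by (unfold h; apply sqrt_sqrt; lra).
  assert (Hh : h > 0) by (unfold h; apply sqrt_lt_R0; lra).
  clearbody s h.
  (* [N 1] and [N (-1)] are the null vectors of height [h] orthogonal to (a,b,c). *)
  set (N e := Vec (h * ((a*c - e*b*s) / r2)) (h * ((b*c + e*a*s) / r2)) h).
  assert (Hhor : forall e, e * e = 1 -> c1 (N e) * c1 (N e) + c2 (N e) * c2 (N e) = h * h).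
  { intros e He. simpl.
    replace (h * ((a*c - e*b*s) / r2) * (h * ((a*c - e*b*s) / r2))
             + h * ((b*c + e*a*s) / r2) * (h * ((b*c + e*a*s) / r2)))
      with (h * h * ((c*c + (e*e) * (s*s)) * r2) / (r2 * r2)) by (unfold r2 in *; field; lra).
    rewrite He, Hs2. field; lra. }
  assert (Hframe : forall e, e * e = 1 ->
    null (N e) /\ future (N e) /\ enorm (N e) = 1 /\ ldot (Vec a b c) (N e) = 0).
  { intros e He. pose proof (Hhor e He) as H. unfold null, future, enorm, ldot in *.
    simpl in *. repeat split.
    - lra.
    - lra.
    - transitivity (sqrt 1); [f_equal; lra | apply sqrt_1].
    - unfold r2 in *. field. lra. }
  exists (N 1), (N (-1)).
  destruct (Hframe 1 ltac:(lra)) as (? & ? & ? & ?).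
  destruct (Hframe (-1) ltac:(lra)) as (? & ? & ? & ?).
  repeat split; auto.
  replace (det3 (N 1) (N (-1)) (Vec a b c)) with (h * h * (2 * s / r2) * (r2 - c*c))
    by (unfold det3; simpl; unfold r2; field; fold r2; lra).
  apply Rmult_lt_0_compat; [apply Rmult_lt_0_compat|]; try nra.
  apply Rdiv_lt_0_compat; lra.
Qed.

Lemma null_frame_vpm v : spacelike v -> null_frame v (vminus v) (vplus v).
Proof.
  intro Hv. unfold vminus, vplus, vpm.
  apply (epsilon_spec (inhabits (vzero, vzero)) (fun pr => null_frame v (fst pr) (snd pr))).
  destruct (null_frame_exists v Hv) as [m [n H]]. exists (m, n). exact H.
Qed.

Lemma Pset_frame_iff v m n y :
  spacelike v -> null_frame v m n -> (Pset n y <-> ldot y n = 0 /\ ldot y v > 0).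
Proof.
  intros Hv Hf. split.
  - intros [Hy [Hyn [c [Hc Ec]]]]. split; [exact Hyn|].
    destruct (Rtotal_order (ldot y v) 0) as [L|[L|L]]; [exfalso|exfalso|exact L].
    + pose proof (null_frame_vpm y Hy) as Hfy.
      destruct (frame_minus_parallel v m n y _ _ Hv Hf Hy Hfy Hyn L) as [c' [Hc' Ec']].
      destruct Hfy as (_ & _ & _ & _ & _ & _ & _ & _ & Hdet).
      rewrite Ec, Ec' in Hdet. unfold det3, vscale in Hdet; simpl in Hdet. lra.
    + pose proof (frame_ldot_self_of_perp v m n Hv Hf y (or_introl Hyn)) as E.
      unfold spacelike in Hy. rewrite E, L in Hy. lra.
  - intros [Hyn Hyv].
    assert (Hy : spacelike y).
    { unfold spacelike. rewrite (frame_ldot_self_of_perp v m n Hv Hf y (or_introl Hyn)).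
      unfold spacelike in Hv. apply Rdiv_lt_0_compat; nra. }
    split; [exact Hy | split; [exact Hyn|]].
    exact (frame_plus_parallel v m n y _ _ Hv Hf Hy (null_frame_vpm y Hy) Hyn Hyv).
Qed.

Definition crooked_set (v y : vec) : Prop :=
  (ldot y (vplus v) = 0 /\ ldot y v > 0) \/
  (ldot y (vminus v) = 0 /\ ldot y v < 0) \/
  (ldot y v = 0 /\ ldot y y <= 0).

Lemma crooked_planeE v p q :
  spacelike v -> (crooked_plane v p q <-> crooked_set v (vsub q p)).
Proof.
  intros Hv. pose proof (null_frame_vpm v Hv) as Hf.
  unfold crooked_plane, crooked_set.
  rewrite (Pset_frame_iff v _ _ _ Hv Hf),
    (Pset_frame_iff (vopp v) _ _ _ (spacelike_opp v Hv) (null_frame_opp v _ _ Hf)),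
    ldot_oppr, (ldot_comm v).
  intuition lra.
Qed.

Lemma crooked_set_scale v y s : 0 <= s -> crooked_set v y -> crooked_set v (vscale s y).
Proof.
  intros Hs Hy. unfold crooked_set. rewrite !ldot_scalel, !ldot_scaler.
  destruct (Req_dec s 0) as [E|E].
  - subst s. right; right. split; [ring | lra].
  - destruct Hy as [[H1 H2]|[[H1 H2]|[H1 H2]]]; rewrite H1.
    + left. split; [ring | nra].
    + right; left. split; [ring | nra].
    + right; right. split; [ring | nra].
Qed.

Lemma continuity_Rmax f g :
  continuity f -> continuity g -> continuity (fun s => Rmax (f s) (g s)).
Proof.
  intros Hf Hg x.
  apply (continuity_pt_locally_ext (fun s => (f s + g s + Rabs (f s - g s)) / 2) _ 1);
    [lra | | reg].
  intros y _. unfold Rmax, Rabs; destruct Rle_dec, Rcase_abs; lra.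
Qed.

Lemma continuity_Rmin f g :
  continuity f -> continuity g -> continuity (fun s => Rmin (f s) (g s)).
Proof.
  intros Hf Hg x.
  apply (continuity_pt_locally_ext (fun s => (f s + g s - Rabs (f s - g s)) / 2) _ 1);
    [lra | | reg].
  intros y _. unfold Rmin, Rabs; destruct Rle_dec, Rcase_abs; lra.
Qed.

Lemma continuity_sign_const f :
  continuity f -> (forall s, 0 <= s <= 1 -> f s <> 0) -> (f 0 < 0 <-> f 1 < 0).
Proof.
  intros Hf Nz.
  assert (Hsign : ~ f 0 * f 1 <= 0).
  { intro H. destruct (IVT_cor f 0 1 Hf ltac:(lra) H) as [z [Hz Ez]]. exact (Nz z Hz Ez). }
  pose proof (Nz 0 ltac:(lra)). pose proof (Nz 1 ltac:(lra)).
  split; intro; destruct (Rtotal_order (f 0) 0) as [|[|]], (Rtotal_order (f 1) 0) as [|[|]];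
    try lra; exfalso; apply Hsign; nra.
Qed.

(* With [a = x.u^+], [b = x.u^-], [g = x.u], [side3 a b g < 0] holds exactly when
   [(g <= 0 -> b < 0) /\ (g >= 0 -> a > 0)], the interior of [H(-u,0)]. *)
Definition side3 (a b g : R) : R := Rmax (Rmin (- a) (Rmax b g)) (Rmin b (- g)).

Definition side (u x : vec) : R := side3 (ldot x (vplus u)) (ldot x (vminus u)) (ldot x u).

Ltac case_minmax := unfold side3, Rmax, Rmin in *; repeat destruct Rle_dec.

Lemma side3_eq0 a b g :
  side3 a b g = 0 -> (g = 0 /\ 0 <= a * b) \/ (g > 0 /\ a = 0) \/ (g < 0 /\ b = 0).
Proof.
  intro H. destruct (Rtotal_order g 0) as [Hg|[Hg|Hg]].
  - right; right. split; [exact Hg|]. case_minmax; lra.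
  - left. split; [exact Hg|]. subst g. case_minmax; nra.
  - right; left. split; [exact Hg|]. case_minmax; lra.
Qed.

Lemma side3_lt0 a b g : side3 a b g < 0 -> (g <= 0 -> b < 0) /\ (g >= 0 -> a > 0).
Proof. intro H; split; intro; case_minmax; lra. Qed.

Lemma side3_le0_of_neg a b g : b < 0 -> g <= 0 -> side3 a b g <= 0.
Proof. intros; case_minmax; lra. Qed.

Lemma side3_le0_of_pos a b g : a > 0 -> g > 0 -> side3 a b g <= 0.
Proof. intros; case_minmax; lra. Qed.

Lemma continuity_side_vadd_vscale u c d : continuity (fun s => side u (vadd c (vscale s d))).
Proof.
  unfold side, side3.
  apply continuity_Rmax; apply continuity_Rmin; try apply continuity_Rmax;
    unfold ldot, vadd, vscale; simpl; reg.
Qed.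

Lemma side_vadd_vscale u w d s :
  side u (vadd w (vscale s d))
  = side3 (ldot w (vplus u) + s * ldot d (vplus u)) (ldot w (vminus u) + s * ldot d (vminus u))
          (ldot w u + s * ldot d u).
Proof. unfold side; rewrite !ldot_addl, !ldot_scalel; reflexivity. Qed.

Lemma crooked_set_of_side_eq0 u x : spacelike u -> side u x = 0 -> crooked_set u x.
Proof.
  intros Hu H. pose proof (null_frame_vpm u Hu) as Hf.
  apply side3_eq0 in H. unfold crooked_set.
  destruct H as [[Hg Hab]|[[Hg Ha]|[Hg Hb]]]; [right; right | left | right; left];
    split; auto.
  pose proof (frame_mn_lt0 u _ _ Hf) as Hmn.
  rewrite (frame_ldot u _ _ Hu Hf x x), Hg.
  replace (ldot x (vplus u) * ldot x (vminus u) + ldot x (vminus u) * ldot x (vplus u))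
    with (2 * (ldot x (vplus u) * ldot x (vminus u))) by ring.
  unfold Rdiv. rewrite !Rmult_0_l, Rplus_0_r.
  assert (/ ldot (vminus u) (vplus u) < 0) by (apply Rinv_lt_0_compat; lra).
  nra.
Qed.

Lemma side_sign_segment u c d :
  (forall s, 0 <= s <= 1 -> side u (vadd c (vscale s d)) <> 0) ->
  (side u c < 0 <-> side u (vadd c d) < 0).
Proof.
  intro Nz.
  pose proof (continuity_sign_const _ (continuity_side_vadd_vscale u c d) Nz) as H; cbv beta in H.
  replace (vadd c (vscale 0 d)) with c in H by vec_ring.
  replace (vadd c (vscale 1 d)) with (vadd c d) in H by vec_ring.
  exact H.
Qed.

(* [crooked_set v] is a cone, so it is star-shaped about the origin. *)
Lemma side_sign_on_crooked_set u v w :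
  (forall y, crooked_set v y -> side u (vadd w y) <> 0) ->
  forall y, crooked_set v y -> (side u (vadd w y) < 0 <-> side u w < 0).
Proof.
  intros Nz y Hy. symmetry. apply side_sign_segment.
  intros s Hs. apply Nz, crooked_set_scale; [lra | exact Hy].
Qed.

Lemma exists_affine_neg x0 x1 y0 y1 :
  x1 < 0 -> y1 < 0 -> exists s, s > 0 /\ x0 + s * x1 < 0 /\ y0 + s * y1 < 0.
Proof.
  intros H1 H2. exists (1 + Rabs x0 / (- x1) + Rabs y0 / (- y1)).
  assert (A1 : 0 <= Rabs x0 / (- x1))
    by (apply Rmult_le_pos; [apply Rabs_pos | left; apply Rinv_0_lt_compat; lra]).
  assert (A2 : 0 <= Rabs y0 / (- y1))
    by (apply Rmult_le_pos; [apply Rabs_pos | left; apply Rinv_0_lt_compat; lra]).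
  assert (B1 : Rabs x0 / (- x1) * x1 = - Rabs x0) by (field; lra).
  assert (B2 : Rabs y0 / (- y1) * y1 = - Rabs y0) by (field; lra).
  pose proof (Rle_abs x0). pose proof (Rle_abs y0).
  split; [lra | split; nra].
Qed.

(* Go far out along a wing of [C(v)] in direction [v] or [-v] or, when [v] is
   orthogonal to both [u^+] and [u^-], along its stem in direction [u^+] or [-u^-]. *)
Lemma side_nonpos_on_crooked_set u v w :
  spacelike u -> spacelike v -> ldot u v < 0 ->
  ldot v (vplus u) <= 0 -> ldot v (vminus u) <= 0 ->
  exists y, crooked_set v y /\ side u (vadd w y) <= 0.
Proof.
  intros Hu Hv Huv Hvn Hvm.
  pose proof (null_frame_vpm u Hu) as Hf. pose proof (null_frame_vpm v Hv) as Hfv.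
  pose proof (frame_mn_lt0 u _ _ Hf) as Hmn.
  destruct Hf as (Hm & Hn & _ & _ & _ & _ & Hum & Hun & _).
  destruct Hfv as (_ & _ & _ & _ & _ & _ & Hvm' & Hvn' & _).
  unfold spacelike, null in *. rewrite (ldot_comm u v) in Huv.
  destruct (Rlt_dec (ldot v (vminus u)) 0) as [L1|L1];
  [|destruct (Rlt_dec (ldot v (vplus u)) 0) as [L2|L2];
  [|destruct (Rle_dec (ldot w u) 0) as [L3|L3]]].
  - destruct (exists_affine_neg (ldot w (vminus u)) (ldot v (vminus u)) (ldot w u) (ldot v u) L1 Huv)
      as [s [Hs [B1 B2]]].
    exists (vscale s v). split.
    + apply crooked_set_scale; [lra|]. left. split; lra.
    + rewrite side_vadd_vscale. apply side3_le0_of_neg; lra.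
  - destruct (exists_affine_neg (- ldot w (vplus u)) (ldot v (vplus u)) (- ldot w u) (ldot v u) L2 Huv)
      as [s [Hs [B1 B2]]].
    exists (vscale s (vopp v)). split.
    + apply crooked_set_scale; [lra|]. right; left.
      rewrite !ldot_oppl. split; lra.
    + rewrite side_vadd_vscale, !ldot_oppl. apply side3_le0_of_pos; lra.
  - destruct (exists_affine_neg (ldot w (vminus u)) (ldot (vplus u) (vminus u))
                (ldot w (vminus u)) (ldot (vplus u) (vminus u))) as [s [Hs [B1 _]]];
      [rewrite ldot_comm; lra .. |].
    exists (vscale s (vplus u)). split.
    + apply crooked_set_scale; [lra|]. right; right. rewrite ldot_comm. split; lra.
    + rewrite side_vadd_vscale, (ldot_comm (vplus u) u), Hun. apply side3_le0_of_neg; lra.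
  - destruct (exists_affine_neg (- ldot w (vplus u)) (ldot (vminus u) (vplus u))
                (- ldot w (vplus u)) (ldot (vminus u) (vplus u)) Hmn Hmn) as [s [Hs [B1 _]]].
    exists (vscale s (vopp (vminus u))). split.
    + apply crooked_set_scale; [lra|]. right; right.
      rewrite !ldot_oppl, !ldot_oppr, ldot_comm. split; lra.
    + rewrite side_vadd_vscale, !ldot_oppl, (ldot_comm (vminus u) u), Hum. apply side3_le0_of_pos; lra.
Qed.

Lemma crooked_halfspace_opp_of_side u p q :
  spacelike u -> side u (vsub q p) < 0 -> crooked_halfspace (vopp u) p q.
Proof.
  intros Hu Hside. apply side3_lt0 in Hside. destruct Hside as [Hneg Hpos].
  pose proof (null_frame_vpm u Hu) as Hf.
  pose proof (spacelike_opp u Hu) as Hu'.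
  pose proof (null_frame_vpm _ Hu') as Hf'.
  pose proof Hu as Huu; unfold spacelike in Huu.
  pose proof Hf as (_ & _ & _ & _ & _ & _ & Hum & Hun & _).
  destruct (frame_plus_parallel (vopp u) _ _ (vopp u) _ _ Hu' (null_frame_opp u _ _ Hf) Hu' Hf')
    as [c [Hc Ec]]; [rewrite ldot_oppl; lra | exact Hu' |].
  destruct (frame_minus_parallel u _ _ (vopp u) _ _ Hu Hf Hu' Hf')
    as [c' [Hc' Ec']]; [rewrite ldot_oppl; lra | rewrite ldot_oppl; lra |].
  unfold crooked_halfspace. rewrite Ec, Ec', !ldot_scaler, ldot_oppr.
  split; intro H.
  - assert (ldot (vsub q p) (vminus u) < 0) by (apply Hneg; lra). nra.
  - assert (ldot (vsub q p) (vplus u) > 0) by (apply Hpos; lra). nra.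
Qed.

Theorem lemma4p2 (u v p w : vec) :
  consistently_oriented2 u v ->
  (forall q, ~ (crooked_plane u p q /\ crooked_plane v (vadd p w) q)) ->
  forall q, crooked_plane v (vadd p w) q -> crooked_halfspace (vopp u) p q.
Proof.
  intros [Hu [Hv [Huv [_ [_ [Hvn Hvm]]]]]] Hdisj q Hq.
  apply crooked_halfspace_opp_of_side; [exact Hu|].
  assert (Nz : forall y, crooked_set v y -> side u (vadd w y) <> 0).
  { intros y Hy H0. apply (Hdisj (vadd (vadd p w) y)). split.
    - apply crooked_planeE; [exact Hu|].
      replace (vsub (vadd (vadd p w) y) p) with (vadd w y) by vec_ring.
      exact (crooked_set_of_side_eq0 u _ Hu H0).
    - apply crooked_planeE; [exact Hv|].
      replace (vsub (vadd (vadd p w) y) (vadd p w)) with y by vec_ring.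
      exact Hy. }
  destruct (side_nonpos_on_crooked_set u v w Hu Hv Huv Hvn Hvm) as [y0 [Hy0 Hle]].
  assert (Hw : side u w < 0).
  { apply (side_sign_on_crooked_set u v w Nz y0 Hy0). pose proof (Nz y0 Hy0). lra. }
  apply crooked_planeE in Hq; [|exact Hv].
  replace (vsub q p) with (vadd w (vsub q (vadd p w))) by vec_ring.
  apply (side_sign_on_crooked_set u v w Nz _ Hq). exact Hw.
Qed.
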